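(* Let $T\ge 1$, $d=2T$, $\lambda,\mu>0$, $a\in\mathbb{R}$, $b,c>0$, and consider $F$ built from the functions $f_i$ described in the context. Let $x^\star$ be the unique minimizer of $F$. Then all blocks $x^\star_i$ of the first group are equal to a common vector $y^\star\in\mathbb{R}^d$, and all blocks of the second group are equal to a common vector $z^\star\in\mathbb{R}^d$. Moreover, for every $1\le i\le 2T-1$, $$w_{i+1}=Q_r\,w_i,$$ where $w_i=(z^\star_i,y^\star_i)^\top$ if $i$ is even and $w_i=(y^\star_i,z^\star_i)^\top$ if $i$ is odd. Here $r=\tfrac12$ if $n$ is even and $r=\tfrac{M}{n}$ if $n=2M+1$. With $s=\mu/\lambda$, $$Q_r=\begin{pmatrix}-\frac{r}{c} & \frac{c+s+r}{c}\\[2pt] -\frac{c+s+r}{c} & \frac{(c+s+r)^2}{cr}-\frac{c}{r}\end{pmatrix}.$$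
   Context: The objective is $F(x)=\frac1n\sum_{i=1}^n f_i(x_i)+\lambda\frac1{2n}\sum_{i=1}^n\|x_i-\bar x\|^2$ for $x=[x_1,\dots,x_n]\in\mathbb{R}^{nd}$, where $\bar x=\frac1n\sum_i x_i$. The functions below are written with $y=(y_1,\dots,y_{2T})\in\mathbb{R}^{2T}$. Even $n$. For $1\le i\le n/2$ (first group), $$f_i(y)=\tfrac{\mu}{2}\|y\|^2+ay_1+\tfrac{\lambda c}{2}\sum_{j=1}^{T-1}(y_{2j}-y_{2j+1})^2+\tfrac{\lambda b}{2}y_{2T}^2 .$$ For $n/2<i\le n$ (second group), $$f_i(y)=\tfrac{\mu}{2}\|y\|^2+\tfrac{\lambda c}{2}\sum_{j=0}^{T-1}(y_{2j+1}-y_{2j+2})^2 .$$ Odd $n=2M+1$ with $M\ge1$. For $1\le i\le M$ (first group), $$f_i(y)=\tfrac{M+1}{M}\tfrac{\mu}{2}\|y\|^2+ay_1+\tfrac{\lambda}{2}\tfrac{M+1}{M}c\sum_{j=1}^{T-1}(y_{2j}-y_{2j+1})^2+\tfrac{\lambda b}{2}y_{2T}^2 .$$ For $M<i\le n$ (second group), $f_i$ is the second-group function from the even case. *)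

From HB Require Import structures.
From mathcomp Require Import all_boot all_order all_algebra.
Set Implicit Arguments. Unset Strict Implicit. Unset Printing Implicit Defensive.
Import Order.TTheory GRing.Theory Num.Theory.
Local Open Scope ring_scope.

Section Defs.
Variable R : realFieldType.

(* 0-based coordinate access of a row vector by a natural number (0 outside range) *)
Definition at0 (m : nat) (y : 'rV[R]_m) (k : nat) : R :=
  match @insub nat (fun k => k < m)%N _ k with Some i => y 0 i | None => 0 end.

(* 1-based coordinate y_j, as in the paper *)
Definition cf (m : nat) (y : 'rV[R]_m) (j : nat) : R := at0 y j.-1.

Definition sqn (m : nat) (y : 'rV[R]_m) : R := \sum_(i < m) y 0 i ^+ 2.

Variables (T : nat) (lam mu a b c : R).
Local Notation d := (2 * T)%N.

Definition f1_even (y : 'rV[R]_d) : R :=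
  mu / 2 * sqn y + a * cf y 1
  + lam * c / 2 * \sum_(1 <= j < T) (cf y (2 * j) - cf y (2 * j + 1)) ^+ 2
  + lam * b / 2 * cf y d ^+ 2.

Definition f1_odd (M : nat) (y : 'rV[R]_d) : R :=
  (M.+1)%:R / M%:R * (mu / 2) * sqn y + a * cf y 1
  + lam / 2 * ((M.+1)%:R / M%:R) * c
      * \sum_(1 <= j < T) (cf y (2 * j) - cf y (2 * j + 1)) ^+ 2
  + lam * b / 2 * cf y d ^+ 2.

Definition f2 (y : 'rV[R]_d) : R :=
  mu / 2 * sqn y
  + lam * c / 2 * \sum_(0 <= j < T) (cf y (2 * j + 1) - cf y (2 * j + 2)) ^+ 2.

(* f_i for 0-based block index i in 'I_n : the first group is i < n./2
   (n./2 = n/2 for even n, = M for n = 2M+1) *)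
Definition fi (n : nat) (i : 'I_n) (y : 'rV[R]_d) : R :=
  if (i < n./2)%N then (if odd n then f1_odd n./2 y else f1_even y) else f2 y.

Definition xbar (n : nat) (x : 'I_n -> 'rV[R]_d) : 'rV[R]_d :=
  n%:R^-1 *: \sum_(i < n) x i.

Definition Fobj (n : nat) (x : 'I_n -> 'rV[R]_d) : R :=
  n%:R^-1 * \sum_(i < n) fi i (x i)
  + lam / (2 * n%:R) * \sum_(i < n) sqn (x i - xbar x).

End Defs.

Definition rpar (R : realFieldType) (n : nat) : R :=
  if odd n then (n./2)%:R / n%:R else 2^-1.

Definition Qmat (R : realFieldType) (lam mu c r : R) : 'M[R]_2 :=
  let s := mu / lam in
  \matrix_(i < 2, j < 2)
    if (i == 0) && (j == 0) then - (r / c)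
    else if (i == 0) then (c + s + r) / c
    else if (j == 0) then - ((c + s + r) / c)
    else (c + s + r) ^+ 2 / (c * r) - c / r.

Definition wvec (R : realFieldType) (m : nat) (y z : 'rV[R]_m) (i : nat) : 'cV[R]_2 :=
  \col_(k < 2)
    if odd i then (if k == 0 then cf y i else cf z i)
    else (if k == 0 then cf z i else cf y i).
Arguments Fobj [R] T lam mu a b c [n] x.

From HB Require Import structures.
From mathcomp Require Import all_boot all_order all_algebra ring zify.
From mathcomp Require Import perm.
Import Order.TTheory GRing.Theory Num.Theory.
Local Open Scope ring_scope.
Set Implicit Arguments. Unset Strict Implicit.

(* Each f_i is convex and F is strongly convex in the deviations
   x_i - xbar; moreover F is invariant under permutations of the blocks that
   preserve the two groups.  Averaging a minimizer with its image under the
   transposition of two blocks of one group cannot increase F, and strictly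
   decreases it unless the two blocks coincide.  So the first-group blocks
   equal some y and the second-group blocks some z.

   Along a coordinate direction F is a quadratic polynomial, so
   at a minimizer its slope vanishes (if al <= al + be t + ga t^2 for every
   t then be = 0).  With xbar = r y + (1 - r) z these stationarity conditions,
   read at coordinates i and i+1 of the block whose coupling term links them
   (z for odd i, y for even i), form a 2x2 linear system whose solution is
   w_{i+1} = Q_r w_i. *)

Section Coordinates.
Variables (R : realFieldType) (m : nat).
Implicit Types (u v : 'rV[R]_m) (s t : R).

Lemma cfD u v k : cf (u + v) k = cf u k + cf v k.
Proof. by rewrite /cf /at0; case: insubP => [i _ _|_]; rewrite ?mxE ?addr0. Qed.

Lemma cfZ s u k : cf (s *: u) k = s * cf u k.
Proof. by rewrite /cf /at0; case: insubP => [i _ _|_]; rewrite ?mxE ?mulr0. Qed.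

Lemma cf_ord u k (hk : (k.-1 < m)%N) : cf u k = u 0 (Ordinal hk).
Proof.
rewrite /cf /at0; case: insubP => [j _ hj|]; last by rewrite hk.
by congr (u 0 _); apply: val_inj.
Qed.

Lemma cf_delta (K : 'I_m) k : cf (delta_mx 0 K : 'rV[R]_m) k = (k.-1 == K)%:R.
Proof.
rewrite /cf /at0; case: insubP => [j _ hj|hk]; first by rewrite mxE eqxx /= -hj.
by case: eqP => // e; move: hk; rewrite e ltn_ord.
Qed.

Lemma cf_pert u (K : 'I_m) t k :
  cf (u + t *: delta_mx 0 K) k = cf u k + t * (k.-1 == K)%:R.
Proof. by rewrite cfD cfZ cf_delta. Qed.

Lemma cf_mid u v k : cf (2^-1 *: (u + v)) k = (cf u k + cf v k) / 2.
Proof. by rewrite cfZ cfD mulrC. Qed.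

Lemma sum_ord_indicator (F : 'I_m -> R) (K : 'I_m) :
  \sum_i F i * (i == K)%:R = F K.
Proof.
rewrite (bigD1 K) //= eqxx mulr1 big1 ?addr0 // => i /negbTE ->.
by rewrite mulr0.
Qed.

Lemma sum_ord_indicator1 (K : 'I_m) : \sum_(i < m) (i == K)%:R = 1 :> R.
Proof.
by rewrite -[RHS](sum_ord_indicator (fun=> 1) K); apply: eq_bigr => i _; rewrite mul1r.
Qed.

Lemma sqn_pert u (K : 'I_m) t :
  sqn (u + t *: delta_mx 0 K) = sqn u + t * (2 * u 0 K) + t ^+ 2.
Proof.
rewrite /sqn; transitivity (\sum_(i < m) (u 0 i ^+ 2
    + t * (2 * (u 0 i * (i == K)%:R)) + t ^+ 2 * (i == K)%:R)).
  by apply: eq_bigr => i _; rewrite !mxE; case: (i == K); rewrite /= ?mulr1 ?mulr0; ring.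
by rewrite !big_split /= -!mulr_sumr (sum_ord_indicator (fun i => u 0 i))
  sum_ord_indicator1 mulr1.
Qed.

Lemma sqn_ge0 u : 0 <= sqn u.
Proof. by apply: sumr_ge0 => i _; rewrite sqr_ge0. Qed.

Lemma sqn_eq0 u : sqn u = 0 -> u = 0.
Proof.
move=> h; apply/rowP => i; rewrite mxE.
have := @psumr_eq0P _ _ _ _ (fun j _ => sqr_ge0 (u 0 j)) h i isT.
by move/eqP; rewrite sqrf_eq0 => /eqP.
Qed.

Lemma sqn_mid u v :
  sqn u + sqn v - 2 * sqn (2^-1 *: (u + v)) = 2^-1 * sqn (u - v).
Proof.
rewrite /sqn mulr_sumr mulr_sumr -big_split -sumrB /=.
by apply: eq_bigr => i _; rewrite !mxE; field.
Qed.
End Coordinates.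

Section RangeSums.
Variable R : realFieldType.
Implicit Types (P p q : nat -> R).

Lemma sum_nat_indicator P m k J : (m <= J < k)%N ->
  \sum_(m <= j < k) P j * (j == J)%:R = P J.
Proof.
move=> hJ; rewrite (eq_bigr (fun j => if j == J then P j else 0)).
  by rewrite -big_mkcond big_nat1_eq hJ.
by move=> j _; case: eqP; rewrite ?mulr1 ?mulr0.
Qed.

(* Derivative of a coupling term: only the pair (p J, q J) involving the
   coordinate K contributes, with sign + if K = p J. *)
Lemma sum_pair_indicator P (ip iq : nat -> nat) m k J K : (m <= J < k)%N ->
  (forall j, (ip j == K) = (j == J)) -> (forall j, iq j != K) ->
  \sum_(m <= j < k) P j * ((ip j == K)%:R - (iq j == K)%:R) = P J.
Proof.
move=> hJ hp hq; rewrite -(sum_nat_indicator P hJ); apply: eq_big_nat => j _.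
by rewrite hp (negbTE (hq j)) subr0.
Qed.

Lemma sum_pair_indicatorN P (ip iq : nat -> nat) m k J K : (m <= J < k)%N ->
  (forall j, (iq j == K) = (j == J)) -> (forall j, ip j != K) ->
  \sum_(m <= j < k) P j * ((ip j == K)%:R - (iq j == K)%:R) = - P J.
Proof.
move=> hJ hq hp; rewrite -(sum_pair_indicator P hJ hq hp) -sumrN.
by apply: eq_bigr => j _; ring.
Qed.

Lemma sum_sq_aff (r : seq nat) p q t :
  \sum_(j <- r) (p j + t * q j) ^+ 2 = \sum_(j <- r) p j ^+ 2
    + t * (2 * \sum_(j <- r) p j * q j) + t ^+ 2 * \sum_(j <- r) q j ^+ 2.
Proof.
rewrite (eq_bigr (fun j => p j ^+ 2 + t * (2 * (p j * q j)) + t ^+ 2 * q j ^+ 2)).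
  by rewrite !big_split /= -!mulr_sumr.
by move=> j _; ring.
Qed.

Lemma sum_sq_mid (r : seq nat) p q :
  \sum_(j <- r) p j ^+ 2 + \sum_(j <- r) q j ^+ 2
    - 2 * \sum_(j <- r) ((p j + q j) / 2) ^+ 2
  = 2^-1 * \sum_(j <- r) (p j - q j) ^+ 2.
Proof.
rewrite mulr_sumr mulr_sumr -big_split -sumrB /=.
by apply: eq_bigr => j _; field.
Qed.
End RangeSums.

Lemma quadratic_slope0 (R : realFieldType) (al be ga : R) :
  (forall t, al <= al + be * t + ga * t ^+ 2) -> be = 0.
Proof.
move=> H; apply/eqP; apply/negPn/negP => hbe.
pose k := `|ga| + 1.
have kp : 0 < k by rewrite ltr_pwDr // normr_ge0.
have := H (- be / k).
have -> : al + be * (- be / k) + ga * (- be / k) ^+ 2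
          = al + be ^+ 2 / k ^+ 2 * (ga - k) by field; rewrite gt_eqF.
rewrite lerDl leNgt pmulr_rlt0 ?subr_lt0 ?ltr_pwDr ?ler_norm //.
by apply: divr_gt0; [rewrite lt_def sqrf_eq0 hbe sqr_ge0 | rewrite exprn_gt0].
Qed.

(* The local functions: the second-group function f2 and the common shape
   [f1_gen A B] of the first-group functions (f1_even and f1_odd only differ
   by the weights A, B). *)
Section LocalFunctions.
Variables (R : realFieldType) (T : nat) (lam mu a b c : R).

Definition f1_gen (A B : R) (y : 'rV[R]_(2 * T)) : R :=
  A * sqn y + a * cf y 1
  + B * \sum_(1 <= j < T) (cf y (2 * j) - cf y (2 * j + 1)) ^+ 2
  + lam * b / 2 * cf y (2 * T) ^+ 2.

Lemma f2_slope (u : 'rV[R]_(2 * T)) (K : 'I_(2 * T)) : exists G, forall t,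
  f2 lam mu c (u + t *: delta_mx 0 K) = f2 lam mu c u
   + t * (mu * u 0 K + lam * c * \sum_(0 <= j < T)
           (cf u (2 * j + 1) - cf u (2 * j + 2))
           * (((2 * j + 1).-1 == K)%:R - ((2 * j + 2).-1 == K)%:R))
   + t ^+ 2 * G.
Proof.
pose p j := cf u (2 * j + 1) - cf u (2 * j + 2).
pose q j := (((2 * j + 1).-1 == K)%:R - ((2 * j + 2).-1 == K)%:R) : R.
exists (mu / 2 + lam * c / 2 * \sum_(0 <= j < T) q j ^+ 2) => t.
rewrite /f2 sqn_pert (eq_bigr (fun j => (p j + t * q j) ^+ 2)); last first.
  by move=> j _; rewrite !cf_pert /p /q; congr (_ ^+ 2); ring.
by rewrite sum_sq_aff /p /q /=; field.
Qed.

Lemma f1_gen_slope A B (u : 'rV[R]_(2 * T)) (K : 'I_(2 * T)) : exists G, forall t,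
  f1_gen A B (u + t *: delta_mx 0 K) = f1_gen A B u
   + t * (2 * A * u 0 K + a * (0%N == K)%:R
          + 2 * B * \sum_(1 <= j < T) (cf u (2 * j) - cf u (2 * j + 1))
            * (((2 * j).-1 == K)%:R - ((2 * j + 1).-1 == K)%:R)
          + lam * b * cf u (2 * T) * ((2 * T).-1 == K)%:R)
   + t ^+ 2 * G.
Proof.
pose p j := cf u (2 * j) - cf u (2 * j + 1).
pose q j := (((2 * j).-1 == K)%:R - ((2 * j + 1).-1 == K)%:R) : R.
exists (A + B * \sum_(1 <= j < T) q j ^+ 2
        + lam * b / 2 * ((2 * T).-1 == K)%:R ^+ 2) => t.
rewrite /f1_gen sqn_pert !cf_pert (eq_bigr (fun j => (p j + t * q j) ^+ 2)).
  by rewrite sum_sq_aff /p /q /=; field.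
by move=> j _; rewrite !cf_pert /p /q; congr (_ ^+ 2); ring.
Qed.

Lemma f2_midpoint (u v : 'rV[R]_(2 * T)) : 0 <= mu -> 0 <= lam * c ->
  2 * f2 lam mu c (2^-1 *: (u + v)) <= f2 lam mu c u + f2 lam mu c v.
Proof.
move=> hm hlc; rewrite -subr_ge0.
pose p j := cf u (2 * j + 1) - cf u (2 * j + 2).
pose q j := cf v (2 * j + 1) - cf v (2 * j + 2).
have -> : f2 lam mu c u + f2 lam mu c v - 2 * f2 lam mu c (2^-1 *: (u + v)) =
    mu / 2 * (2^-1 * sqn (u - v))
    + lam * c / 2 * (2^-1 * \sum_(0 <= j < T) (p j - q j) ^+ 2).
  rewrite -(sqn_mid u v) -(sum_sq_mid (index_iota 0 T) p q) /f2.
  have -> : \sum_(0 <= j < T) (cf (2^-1 *: (u + v)) (2 * j + 1)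
                                - cf (2^-1 *: (u + v)) (2 * j + 2)) ^+ 2
            = \sum_(0 <= j < T) ((p j + q j) / 2) ^+ 2.
    by apply: eq_bigr => j _; rewrite !cf_mid /p /q; congr (_ ^+ 2); field.
  by rewrite /p /q /=; field.
have hs : 0 <= \sum_(0 <= j < T) (p j - q j) ^+ 2.
  by apply: sumr_ge0 => j _; rewrite sqr_ge0.
apply: addr_ge0; apply: mulr_ge0.
- by rewrite divr_ge0.
- by rewrite mulr_ge0 ?invr_ge0 ?sqn_ge0.
- by rewrite divr_ge0.
- by rewrite mulr_ge0 ?invr_ge0.
Qed.

Lemma f1_gen_midpoint A B (u v : 'rV[R]_(2 * T)) :
  0 <= A -> 0 <= B -> 0 <= lam * b ->
  2 * f1_gen A B (2^-1 *: (u + v)) <= f1_gen A B u + f1_gen A B v.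
Proof.
move=> hA hB hlb; rewrite -subr_ge0.
pose p j := cf u (2 * j) - cf u (2 * j + 1).
pose q j := cf v (2 * j) - cf v (2 * j + 1).
have -> : f1_gen A B u + f1_gen A B v - 2 * f1_gen A B (2^-1 *: (u + v)) =
    A * (2^-1 * sqn (u - v))
    + B * (2^-1 * \sum_(1 <= j < T) (p j - q j) ^+ 2)
    + lam * b / 2 * (2^-1 * (cf u (2 * T) - cf v (2 * T)) ^+ 2).
  rewrite -(sqn_mid u v) -(sum_sq_mid (index_iota 1 T) p q) /f1_gen !cf_mid.
  have -> : \sum_(1 <= j < T) (cf (2^-1 *: (u + v)) (2 * j)
                                - cf (2^-1 *: (u + v)) (2 * j + 1)) ^+ 2
            = \sum_(1 <= j < T) ((p j + q j) / 2) ^+ 2.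
    by apply: eq_bigr => j _; rewrite !cf_mid /p /q; congr (_ ^+ 2); field.
  by rewrite /p /q /=; field.
have hs : 0 <= \sum_(1 <= j < T) (p j - q j) ^+ 2.
  by apply: sumr_ge0 => j _; rewrite sqr_ge0.
apply: addr_ge0; first apply: addr_ge0; apply: mulr_ge0 => //.
- by rewrite mulr_ge0 ?invr_ge0 ?sqn_ge0.
- by rewrite mulr_ge0 ?invr_ge0.
- by rewrite divr_ge0.
- by rewrite mulr_ge0 ?invr_ge0 ?sqr_ge0.
Qed.
End LocalFunctions.

Section Objective.
Variables (R : realFieldType) (n T : nat) (lam mu a b c : R).
Hypothesis n_gt0 : (0 < n)%N.
Local Notation fi := (fi lam mu a b c).
Local Notation F := (@Fobj R T lam mu a b c n).

Lemma natn_neq0 : (n%:R : R) != 0.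
Proof. by rewrite pnatr_eq0 -lt0n. Qed.

Lemma sum_deviation (x : 'I_n -> 'rV[R]_(2 * T)) : \sum_j (x j - xbar x) = 0.
Proof.
rewrite sumrB sumr_const card_ord -scaler_nat /xbar scalerA.
by rewrite mulfV ?natn_neq0 // scale1r subrr.
Qed.

(* Stationarity of a minimizer xs along the K-th coordinate of block i0: if
   f_i0 has slope D there, then D + lam ((xs i0)_K - xbar_K) = 0.  Indeed F
   restricted to this line is a quadratic whose slope is this quantity / n. *)
Lemma stationarity (xs : 'I_n -> 'rV[R]_(2 * T))
    (hmin : forall x, F xs <= F x) (i0 : 'I_n) (K : 'I_(2 * T)) (D : R)
    (f : 'rV[R]_(2 * T) -> R) :
  (forall y, fi i0 y = f y) ->
  (exists G, forall t, f (xs i0 + t *: delta_mx 0 K) = f (xs i0) + t * D + t ^+ 2 * G) ->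
  D + lam * (xs i0 0 K - xbar xs 0 K) = 0.
Proof.
move=> hf [G HG]; set e : 'rV[R]_(2 * T) := delta_mx 0 K.
pose w j := xs j - xbar xs.
pose x t j := xs j + (t * (j == i0)%:R) *: e.
pose G' := n%:R^-1 * G + lam / (2 * n%:R) * \sum_j ((j == i0)%:R - n%:R^-1) ^+ 2.
have sum_fi t : \sum_j fi j (x t j) = \sum_j fi j (xs j) + t * D + t ^+ 2 * G.
  transitivity (\sum_j (fi j (xs j) + (j == i0)%:R * (t * D + t ^+ 2 * G))).
    apply: eq_bigr => j _; rewrite /x; case: eqP => [->|_].
      by rewrite mulr1 mul1r !hf HG addrA.
    by rewrite /= mulr0 scale0r !addr0 mul0r addr0.
  by rewrite big_split /= -mulr_suml sum_ord_indicator1 mul1r addrA.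
have xbar_x t : xbar (x t) = xbar xs + (t / n%:R) *: e.
  rewrite /xbar big_split /= -scaler_suml -mulr_sumr sum_ord_indicator1 mulr1.
  by rewrite scalerDr scalerA mulrC.
have dev t j : x t j - xbar (x t) = w j + (t * ((j == i0)%:R - n%:R^-1)) *: e.
  by rewrite xbar_x /x /w mulrBr scalerBl opprD addrACA.
have sum_w : \sum_j w j 0 K = 0.
  by have := congr1 (fun M : 'rV[R]_(2 * T) => M 0 K) (sum_deviation xs); rewrite summxE mxE.
have sum_sqn t : \sum_j sqn (x t j - xbar (x t)) = \sum_j sqn (w j)
    + t * (2 * w i0 0 K) + t ^+ 2 * \sum_j ((j == i0)%:R - n%:R^-1) ^+ 2.
  under eq_bigr => j _ do rewrite dev sqn_pert.
  rewrite !big_split /=; congr (_ + _ + _); last first.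
    by rewrite mulr_sumr; apply: eq_bigr => j _; rewrite exprMn.
  transitivity (\sum_j (t * (2 * (w j 0 K * (j == i0)%:R)) - t * (2 * n%:R^-1 * w j 0 K))).
    by apply: eq_bigr => j _; ring.
  by rewrite sumrB -!mulr_sumr sum_w (sum_ord_indicator (fun j => w j 0 K)) !mulr0 subr0.
have /quadratic_slope0 : forall t,
    F xs <= F xs + (n%:R^-1 * (D + lam * w i0 0 K)) * t + G' * t ^+ 2.
  move=> t; have -> : F xs + (n%:R^-1 * (D + lam * w i0 0 K)) * t + G' * t ^+ 2 = F (x t).
    by rewrite /Fobj sum_fi sum_sqn /G'; field; rewrite natn_neq0.
  exact: hmin.
by move/eqP; rewrite mulf_eq0 invr_eq0 (negbTE natn_neq0) /= => /eqP; rewrite /w !mxE.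
Qed.
End Objective.

Section Grouping.
Variables (R : realFieldType) (n T : nat) (lam mu a b c : R).
Hypothesis n_gt0 : (0 < n)%N.
Hypotheses (hlam : 0 < lam) (hmu : 0 < mu) (hb : 0 < b) (hc : 0 < c).
Local Notation fi := (fi lam mu a b c).
Local Notation F := (@Fobj R T lam mu a b c n).

Lemma fi_midpoint (i : 'I_n) (u v : 'rV[R]_(2 * T)) :
  2 * fi i (2^-1 *: (u + v)) <= fi i u + fi i v.
Proof.
have hlb : 0 <= lam * b by rewrite mulr_ge0 // ltW.
have hlc : 0 <= lam * c by rewrite mulr_ge0 // ltW.
rewrite /fi; case: ifP => _; last exact: f2_midpoint (ltW hmu) hlc.
case: ifP => _; last by apply: f1_gen_midpoint; rewrite // divr_ge0 // ltW.
apply: f1_gen_midpoint => //.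
  by rewrite mulr_ge0 ?divr_ge0 ?ler0n // ltW.
by rewrite mulr_ge0 ?(ltW hc) // mulr_ge0 ?divr_ge0 ?ler0n // ltW.
Qed.

Lemma Fobj_midpoint (u v : 'I_n -> 'rV[R]_(2 * T)) :
  lam / (2 * n%:R) * \sum_j 2^-1 * sqn ((u j - xbar u) - (v j - xbar v))
  <= F u + F v - 2 * F (fun j => 2^-1 *: (u j + v j)).
Proof.
set mid := fun j => 2^-1 *: (u j + v j).
have xbar_mid : xbar mid = 2^-1 *: (xbar u + xbar v).
  by rewrite /xbar /mid -scaler_sumr big_split /= scalerA mulrC -scalerA !scalerDr.
have dev_mid j : mid j - xbar mid = 2^-1 *: ((u j - xbar u) + (v j - xbar v)).
  by rewrite xbar_mid /mid -scalerBr opprD addrACA.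
have -> : F u + F v - 2 * F mid
   = n%:R^-1 * \sum_j (fi j (u j) + fi j (v j) - 2 * fi j (mid j))
     + lam / (2 * n%:R) * \sum_j (sqn (u j - xbar u) + sqn (v j - xbar v)
                                  - 2 * sqn (mid j - xbar mid)).
  rewrite !sumrB !big_split /= -!mulr_sumr /Fobj.
  by field; rewrite natn_neq0.
under [X in _ <= _ + _ * X]eq_bigr => j _ do rewrite dev_mid sqn_mid.
rewrite lerDr mulr_ge0 ?invr_ge0 ?ler0n //.
by apply: sumr_ge0 => j _; rewrite subr_ge0 fi_midpoint.
Qed.

Lemma Fobj_perm (s : {perm 'I_n}) (x : 'I_n -> 'rV[R]_(2 * T)) :
    (forall j, (s j < n./2)%N = (j < n./2)%N) ->
  F (fun j => x (s j)) = F x /\ xbar (fun j => x (s j)) = xbar x.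
Proof.
move=> hs; have xbar_s : xbar (fun j => x (s j)) = xbar x.
  by rewrite /xbar [in RHS](reindex_inj (@perm_inj _ s)).
split=> //; rewrite /Fobj xbar_s; congr (_ * _ + _ * _).
  rewrite [RHS](reindex_inj (@perm_inj _ s)) /=.
  by apply: eq_bigr => j _; rewrite /fi hs.
by rewrite [RHS](reindex_inj (@perm_inj _ s)).
Qed.

Lemma minimizer_group_eq (xs : 'I_n -> 'rV[R]_(2 * T))
    (hmin : forall x, F xs <= F x) (i1 i2 : 'I_n) :
  (i1 < n./2)%N = (i2 < n./2)%N -> xs i1 = xs i2.
Proof.
move=> h12; pose v j := xs (tperm i1 i2 j).
have [Fv xbar_v] : F v = F xs /\ xbar v = xbar xs.
  by apply: Fobj_perm => j; case: tpermP => [->|->|].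
set mid := fun j => 2^-1 *: (xs j + v j).
have hdev := Fobj_midpoint xs v; rewrite Fv xbar_v -/mid in hdev.
(* the midpoint improves F by at least the i1-th deviation term *)
have gain : lam / (2 * n%:R) * (2^-1 * sqn (xs i1 - xs i2)) <= 0.
  apply: le_trans (le_trans hdev _); last first.
    by rewrite subr_le0 -mulr2n -[F xs *+ 2]mulr_natl ler_pM2l ?ltr0n.
  rewrite ler_pM2l ?divr_gt0 ?mulr_gt0 ?ltr0n // (bigD1 i1) //= /v tpermL.
  rewrite opprD opprK addrACA addNr addr0 lerDl.
  by apply: sumr_ge0 => j _; rewrite mulr_ge0 ?invr_ge0 ?sqn_ge0.
have hpos : 0 < lam / (2 * n%:R) * 2^-1.
  by rewrite mulr_gt0 ?invr_gt0 ?ltr0n // divr_gt0 // mulr_gt0 ?ltr0n.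
have : sqn (xs i1 - xs i2) <= 0 by move: gain; rewrite mulrA (pmulr_rle0 _ hpos).
by rewrite le_eqVlt ltNge sqn_ge0 orbF => /eqP/sqn_eq0/eqP; rewrite subr_eq0 => /eqP.
Qed.
End Grouping.

Definition col2 (R : Type) (p q : R) : 'cV[R]_2 :=
  \col_(k < 2) if k == 0 then p else q.

Lemma wvecE (R : realFieldType) m (y z : 'rV[R]_m) i :
  wvec y z i = if odd i then col2 (cf y i) (cf z i) else col2 (cf z i) (cf y i).
Proof. by rewrite /wvec /col2; case: (odd i). Qed.

Lemma Qmat_step (R : realFieldType) (lam mu c r v0 u0 v1 u1 : R) :
  lam != 0 -> c != 0 -> r != 0 ->
  mu * u0 + lam * c * (u0 - u1) + lam * r * (u0 - v0) = 0 ->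
  mu * u1 + lam * c * (u1 - u0) + lam * r * (u1 - v1) = 0 ->
  col2 u1 v1 = Qmat lam mu c r *m col2 v0 u0.
Proof.
move=> hl hc hr E0 E1.
have eu1 : u1 = - (r / c) * v0 + (c + mu / lam + r) / c * u0.
  apply/eqP; rewrite -subr_eq0; apply/eqP.
  rewrite (_ : u1 - _ = - (mu * u0 + lam * c * (u0 - u1) + lam * r * (u0 - v0)) / (lam * c)).
    by rewrite E0 oppr0 mul0r.
  by field; rewrite hl hc.
have ev1 : v1 = - ((c + mu / lam + r) / c) * v0
                + ((c + mu / lam + r) ^+ 2 / (c * r) - c / r) * u0.
  apply/eqP; rewrite -subr_eq0; apply/eqP.
  rewrite (_ : v1 - _ = - (mu + lam * c + lam * r) / (lam ^+ 2 * c * r)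
              * (mu * u0 + lam * c * (u0 - u1) + lam * r * (u0 - v0))
           - (lam * r)^-1 * (mu * u1 + lam * c * (u1 - u0) + lam * r * (u1 - v1))).
    by rewrite E0 E1 !mulr0 subrr.
  by field; rewrite hl hc hr.
apply/matrixP => p q; rewrite !mxE !big_ord_recl big_ord0 !mxE /=.
by case: p => [[|[|//]]] hp /=; rewrite addr0.
Qed.

Section Minimizer.
Variables (R : realFieldType) (n T : nat) (lam mu a b c : R).
Hypotheses (hn : (2 <= n)%N) (hlam : 0 < lam) (hmu : 0 < mu) (hb : 0 < b) (hc : 0 < c).
Variable xs : 'I_n -> 'rV[R]_(2 * T).
Hypothesis hmin : forall x : 'I_n -> 'rV[R]_(2 * T),
  Fobj T lam mu a b c xs <= Fobj T lam mu a b c x.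

Let n_gt0 : (0 < n)%N. Proof. exact: ltnW. Qed.
Let last_lt : (n.-1 < n)%N. Proof. by rewrite ltn_predL. Qed.
Let half_gt0 : (0 < n./2)%N. Proof. by rewrite half_gt0. Qed.
Let half_le : (n./2 + n./2 <= n)%N.
Proof. by rewrite addnn -{2}(odd_double_half n) leq_addl. Qed.
Let first : 'I_n := Ordinal n_gt0.
Let last : 'I_n := Ordinal last_lt.
Local Notation r := (rpar R n).

Definition yv : 'rV[R]_(2 * T) := xs first.
Definition zv : 'rV[R]_(2 * T) := xs last.

Lemma first_group (i : 'I_n) : (i < n./2)%N -> xs i = yv.
Proof.
by move=> h; apply: (minimizer_group_eq n_gt0 hlam hmu hb hc hmin); rewrite h /= half_gt0.
Qed.

Lemma second_group (i : 'I_n) : (n./2 <= i)%N -> xs i = zv.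
Proof.
move=> h; apply: (minimizer_group_eq n_gt0 hlam hmu hb hc hmin).
by apply/idP/idP => /=; lia.
Qed.

(* Weight of the first-group quadratic terms relative to the second group:
   1 for even n, (M+1)/M for n = 2M+1.  It satisfies 1 - r = kappa r. *)
Definition kappa : R := if odd n then (n./2).+1%:R / (n./2)%:R else 1.

Let half_neq0 : ((n./2)%:R : R) != 0.
Proof. by rewrite pnatr_eq0 -lt0n. Qed.

Let natn_split : (n%:R : R) = (odd n)%:R + 2 * (n./2)%:R.
Proof. by rewrite -{1}(odd_double_half n) natrD -muln2 natrM mulrC. Qed.

Lemma rpar_half : r = (n./2)%:R / n%:R.
Proof.
rewrite /rpar; case: ifP => ho //.
have := natn_neq0 R n_gt0; rewrite natn_split ho /= => hn0.
by field; rewrite half_neq0.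
Qed.

Lemma rpar_neq0 : r != 0.
Proof. by rewrite rpar_half mulf_neq0 ?invr_eq0 ?natn_neq0. Qed.

Lemma one_sub_rpar : 1 - r = kappa * r.
Proof.
have := natn_neq0 R n_gt0; rewrite rpar_half /kappa natn_split.
by case: (odd n) => /= hn0; field; rewrite ?hn0 ?half_neq0.
Qed.

Lemma kappa_neq0 : kappa != 0.
Proof.
by rewrite /kappa; case: (odd n); rewrite ?oner_neq0 // mulf_neq0 ?invr_eq0 // pnatr_eq0.
Qed.

Lemma fi_last (u : 'rV[R]_(2 * T)) : fi lam mu a b c last u = f2 lam mu c u.
Proof. by rewrite /fi ifF //; apply/negbTE; rewrite -leqNgt /=; lia. Qed.

Lemma fi_first (u : 'rV[R]_(2 * T)) :
  fi lam mu a b c first u = f1_gen lam a b (kappa * (mu / 2)) (kappa * (lam * c / 2)) u.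
Proof.
rewrite /fi ifT // /kappa /f1_gen; case: (odd n).
  by rewrite /f1_odd; ring.
by rewrite /f1_even !mul1r.
Qed.

Lemma xbar_coord K : xbar xs 0 K = r * yv 0 K + (1 - r) * zv 0 K.
Proof.
have sum_xs : \sum_j xs j = yv *+ n./2 + zv *+ (n - n./2).
  rewrite (eq_bigr (fun j : 'I_n => if (j < n./2)%N then yv else zv)); last first.
    move=> j _; case: ifP => h; first exact: first_group.
    by apply: second_group; rewrite leqNgt h.
  rewrite -(big_mkord xpredT (fun j => if (j < n./2)%N then yv else zv)).
  rewrite (big_cat_nat _ (n := n./2)) //=; last by lia.
  rewrite (eq_big_nat _ _ (F2 := fun=> yv)); last by move=> j /andP [_ ->].
  rewrite [X in _ + X](eq_big_nat _ _ (F2 := fun=> zv)); last first.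
    by move=> j /andP [h _]; rewrite ltnNge h.
  by rewrite !sumr_const_nat subn0.
rewrite /xbar sum_xs [LHS]mxE [X in _ * X]mxE !mulmxnE.
rewrite -[yv 0 K *+ _]mulr_natr -[zv 0 K *+ _]mulr_natr natrB; last by lia.
by rewrite rpar_half; field; rewrite natn_neq0.
Qed.

Lemma dev_last K : zv 0 K - xbar xs 0 K = r * (zv 0 K - yv 0 K).
Proof. by rewrite xbar_coord; ring. Qed.

Lemma dev_first K : yv 0 K - xbar xs 0 K = kappa * r * (yv 0 K - zv 0 K).
Proof. by rewrite xbar_coord -one_sub_rpar; ring. Qed.

(* The stationarity equation of block u at coordinate k, whose coupling
   term links it to coordinate k', the other block being v. *)
Definition stationary_at (u v : 'rV[R]_(2 * T)) (k k' : nat) : Prop :=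
  mu * cf u k + lam * c * (cf u k - cf u k') + lam * r * (cf u k - cf v k) = 0.

Lemma second_group_stationary k (hk : (k.-1 < 2 * T)%N) :
  mu * cf zv k + lam * c * \sum_(0 <= j < T) (cf zv (2 * j + 1) - cf zv (2 * j + 2))
      * (((2 * j + 1).-1 == k.-1)%:R - ((2 * j + 2).-1 == k.-1)%:R)
  + lam * r * (cf zv k - cf yv k) = 0.
Proof.
have := stationarity n_gt0 hmin fi_last (f2_slope lam mu c zv (Ordinal hk)).
rewrite -[xs last]/zv dev_last -!(cf_ord _ hk) /= => E.
by rewrite -[RHS]E; ring.
Qed.

(* Away from the coordinates 1 and 2T, the first-group stationarity equation
   is the second-group one multiplied by kappa. *)
Lemma first_group_stationary k : (1 < k < 2 * T)%N ->
  mu * cf yv k + lam * c * \sum_(1 <= j < T) (cf yv (2 * j) - cf yv (2 * j + 1))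
      * (((2 * j).-1 == k.-1)%:R - ((2 * j + 1).-1 == k.-1)%:R)
  + lam * r * (cf yv k - cf zv k) = 0.
Proof.
move=> hk2; have hk : (k.-1 < 2 * T)%N by lia.
have := stationarity n_gt0 hmin fi_first
  (f1_gen_slope lam a b (kappa * (mu / 2)) (kappa * (lam * c / 2)) yv (Ordinal hk)).
rewrite -[xs first]/yv dev_first -!(cf_ord _ hk) /= => E.
have not_first : (0%N == k.-1) = false by apply/eqP; lia.
have not_last : ((2 * T).-1 == k.-1) = false by apply/eqP; lia.
rewrite not_first not_last in E.
by apply: (mulfI kappa_neq0); rewrite mulr0 -[RHS]E !mulr0 !addr0; field.
Qed.

Lemma second_group_pair i : odd i -> (i < 2 * T)%N ->
  stationary_at zv yv i i.+1 /\ stationary_at zv yv i.+1 i.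
Proof.
move=> hodd; have [J ->] : exists J, i = (2 * J).+1.
  by exists i./2; rewrite -[in LHS](odd_double_half i) hodd -mul2n.
move=> hi.
have hJ : (0 <= J < T)%N by lia.
pose P j := cf zv (2 * j + 1) - cf zv (2 * j + 2).
have hk0 : ((2 * J).+1.-1 < 2 * T)%N by lia.
have hk1 : ((2 * J).+2.-1 < 2 * T)%N by lia.
have := second_group_stationary hk0; have := second_group_stationary hk1.
rewrite (@sum_pair_indicator _ P (fun j => (2 * j + 1).-1) (fun j => (2 * j + 2).-1)
  _ _ J (2 * J)) //; last 2 first.
- by move=> j; apply/eqP/eqP; lia.
- by move=> j; apply/eqP; lia.
rewrite (@sum_pair_indicatorN _ P (fun j => (2 * j + 1).-1) (fun j => (2 * j + 2).-1)
  _ _ J (2 * J).+1) //; last 2 first.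
- by move=> j; apply/eqP/eqP; lia.
- by move=> j; apply/eqP; lia.
rewrite /stationary_at /P !addn1 !addn2 => E1 E0.
by split; [rewrite -[RHS]E0 | rewrite -[RHS]E1]; ring.
Qed.

Lemma first_group_pair i : ~~ odd i -> (0 < i)%N -> (i < 2 * T)%N ->
  stationary_at yv zv i i.+1 /\ stationary_at yv zv i.+1 i.
Proof.
move=> hev; have [J ->] : exists J, i = 2 * J.
  by exists i./2; rewrite -[in LHS](odd_double_half i) (negbTE hev) -mul2n.
move=> hi0 hi.
have hJ : (1 <= J < T)%N by lia.
pose P j := cf yv (2 * j) - cf yv (2 * j + 1).
have := @first_group_stationary (2 * J) ltac:(lia).
have := @first_group_stationary (2 * J).+1 ltac:(lia).
rewrite (@sum_pair_indicator _ P (fun j => (2 * j).-1) (fun j => (2 * j + 1).-1)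
  _ _ J (2 * J).-1) //; last 2 first.
- by move=> j; apply/eqP/eqP; lia.
- by move=> j; apply/eqP; lia.
rewrite (@sum_pair_indicatorN _ P (fun j => (2 * j).-1) (fun j => (2 * j + 1).-1)
  _ _ J (2 * J)) //; last 2 first.
- by move=> j; apply/eqP/eqP; lia.
- by move=> j; apply/eqP; lia.
rewrite /stationary_at /P !addn1 => E1 E0.
by split; [rewrite -[RHS]E0 | rewrite -[RHS]E1]; ring.
Qed.

Lemma minimizer_recurrence i : (1 <= i <= 2 * T - 1)%N ->
  wvec yv zv i.+1 = Qmat lam mu c r *m wvec yv zv i.
Proof.
move=> /andP [hi1 hi2]; have hi : (i < 2 * T)%N by lia.
have [hl hc0] : lam != 0 /\ c != 0 by split; rewrite gt_eqF.
rewrite !wvecE /=; case ho : (odd i) => /=.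
  have [E0 E1] := second_group_pair ho hi.
  exact: Qmat_step hl hc0 rpar_neq0 E0 E1.
have [E0 E1] := first_group_pair (negbT ho) hi1 hi.
exact: Qmat_step hl hc0 rpar_neq0 E0 E1.
Qed.
End Minimizer.

Unset Implicit Arguments. Set Strict Implicit.

Theorem mainTheorem2 (R : realFieldType) (n T : nat) (lam mu a b c : R)
  (hn : (2 <= n)%N) (hT : (1 <= T)%N)
  (hlam : 0 < lam) (hmu : 0 < mu) (hb : 0 < b) (hc : 0 < c)
  (xs : 'I_n -> 'rV[R]_(2 * T))
  (hmin : forall x : 'I_n -> 'rV[R]_(2 * T),
            Fobj T lam mu a b c xs <= Fobj T lam mu a b c x) :
  exists y z : 'rV[R]_(2 * T),
    (forall i : 'I_n, (i < n./2)%N -> xs i = y) /\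
    (forall i : 'I_n, (n./2 <= i)%N -> xs i = z) /\
    (forall i : nat, (1 <= i <= 2 * T - 1)%N ->
       wvec y z i.+1 = Qmat lam mu c (rpar R n) *m wvec y z i).
Proof.
exists (yv hn xs), (zv hn xs).
split; first exact: (first_group hn hlam hmu hb hc hmin).
split; first exact: (second_group hn hlam hmu hb hc hmin).
exact: (minimizer_recurrence hn hlam hmu hb hc hmin).
Qed.
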